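(* Let $\mathcal{G}$ be a GBS graph of groups and $w=a_0^{k_0}y_1a_1^{k_1}\cdots y_na_n^{k_n}$ a $\mathcal{G}$-factorization. If $w$ represents an element of the subgroup $\langle a_0\rangle$ of $F(\mathcal{G})$, then $w=a_0^k$ in $F(\mathcal{G})$ for $$k=\sum_{\nu=0}^n k_\nu\cdot\prod_{\mu=1}^{\nu}\frac{\alpha_\mu}{\beta_\mu},$$ where $\alpha_\mu=\alpha_{y_\mu}$ and $\beta_\mu=\beta_{y_\mu}$ for $1\le\mu\le n$.
   Context: $\mathcal{G}$ consists of a finite connected graph $Y$ (vertices $V(Y)$, edges $E(Y)$, maps $\iota,\tau:E(Y)\to V(Y)$, fixed-point-free involution $y\mapsto\bar y$ with $\iota(\bar y)=\tau(y)$) and integers $\alpha_y,\beta_y\in\mathbb{Z}\setminus\{0\}$ with $\alpha_y=\beta_{\bar y}$. $F(\mathcal{G})$ is the group with generators $V(Y)\cup E(Y)$ and relations $\bar yy=1$, $y\,b^{\beta_y}\bar y=a^{\alpha_y}$ for each $y\in E(Y)$ with $a=\iota(y)$, $b=\tau(y)$. A $\mathcal{G}$-factorization is a word $a_0^{k_0}y_1a_1^{k_1}\cdots y_na_n^{k_n}$ with $y_i\in E(Y)$, $a_i\in V(Y)$, $k_i\in\mathbb{Z}$, $\iota(y_i)=a_{i-1}$, $\tau(y_i)=a_i$ for $1\le i\le n$ and $a_n=a_0$. *)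

From mathcomp Require Import all_boot all_order all_algebra.
Set Implicit Arguments. Unset Strict Implicit. Unset Printing Implicit Defensive.
Import Order.TTheory GRing.Theory Num.Theory.

Record grp := Grp {
  gcar :> Type;
  gmul : gcar -> gcar -> gcar;
  ginv : gcar -> gcar;
  gone : gcar;
  gmulA : forall x y z, gmul x (gmul y z) = gmul (gmul x y) z;
  gmul1 : forall x, gmul gone x = x;
  gmulV : forall x, gmul (ginv x) x = gone
}.

Fixpoint gexpn (H : grp) (x : H) (n : nat) : H :=
  match n with O => gone H | S m => gmul x (gexpn x m) end.

Definition gexpz (H : grp) (x : H) (z : int) : H :=
  match z with
  | Posz n => gexpn x n
  | Negz n => ginv (gexpn x n.+1)
  end.

Definition Y_adj (V E : finType) (iota tau : E -> V) : rel V :=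
  fun u v => [exists y : E, (iota y == u) && (tau y == v)].

Definition Y_connected (V E : finType) (iota tau : E -> V) : Prop :=
  forall u v : V, connect (Y_adj iota tau) u v.

Definition is_GBS (V E : finType) (iota tau : E -> V) (bar : E -> E)
  (alpha beta : E -> int) : Prop :=
  Y_connected iota tau /\
  (forall y, bar (bar y) = y) /\
  (forall y, bar y <> y) /\
  (forall y, iota (bar y) = tau y) /\
  (forall y, alpha y <> 0 /\ beta y <> 0) /\
  (forall y, alpha y = beta (bar y)).

Definition F_model (V E : finType) (iota tau : E -> V) (bar : E -> E)
  (alpha beta : E -> int) (H : grp) (f : V -> H) (g : E -> H) : Prop :=
  (forall y, gmul (g (bar y)) (g y) = gone H) /\
  (forall y, gmul (gmul (g y) (gexpz (f (tau y)) (beta y))) (g (bar y))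
             = gexpz (f (iota y)) (alpha y)).

Inductive letter (V E : Type) := LV of V & int | LE of E.

Fixpoint eval_word (V E : Type) (H : grp) (f : V -> H) (g : E -> H)
  (w : list (letter V E)) : H :=
  match w with
  | nil => gone H
  | cons (LV a z) w' => gmul (gexpz (f a) z) (eval_word f g w')
  | cons (LE y) w' => gmul (g y) (eval_word f g w')
  end.

(* Equality of two words in the presented group F(G): they are equal in
   F(G) iff they evaluate equally under every interpretation of the
   generators satisfying the defining relations (universal property). *)
Definition F_eq (V E : finType) (iota tau : E -> V) (bar : E -> E)
  (alpha beta : E -> int) (w1 w2 : list (letter V E)) : Prop :=
  forall (H : grp) (f : V -> H) (g : E -> H),
    F_model iota tau bar alpha beta f g -> eval_word f g w1 = eval_word f g w2.

(* The word a_0^{k_0} y_1 a_1^{k_1} ... y_n a_n^{k_n}. *)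
Definition fact_word (V E : Type) (n : nat) (a : nat -> V) (y : nat -> E)
  (k : nat -> int) : list (letter V E) :=
  @LV V E (a 0%N) (k 0%N) :: flatten [seq [:: @LE V E (y i); @LV V E (a i) (k i)] | i <- seq.iota 1 n].

Definition is_G_factorization (V E : finType) (iota tau : E -> V)
  (n : nat) (a : nat -> V) (y : nat -> E) : Prop :=
  (forall i, (1 <= i <= n)%N -> iota (y i) = a i.-1 /\ tau (y i) = a i)
  /\ a n = a 0%N.

From mathcomp Require Import all_boot all_order all_algebra.
From mathcomp Require Import ring.
Set Implicit Arguments. Unset Strict Implicit. Unset Printing Implicit Defensive.
Import Order.TTheory GRing.Theory Num.Theory.
Local Open Scope ring_scope.

(* Map F(G) to the affine group of the rationals: every vertex acts as the
   translation v |-> v + 1 and every edge y as the dilation v |-> s_y v with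
   s_y = alpha_y / beta_y.  The defining relations hold because
   s_ybar = 1 / s_y and conjugating the translation by beta_y by the dilation
   s_y gives the translation by alpha_y.  The factorization then acts as
   v |-> (prod_mu s_mu) v + k, with k the sum of the statement, while a_0^m
   acts as v |-> v + m; so w = a_0^m forces m = k. *)

Section AffineGroup.

Variable F : fieldType.

(* The pair (p, q) stands for the affine map v |-> p v + q, and [amul] is
   composition of maps. *)
Definition aff := {pq : F * F | pq.1 != 0}.

Definition amul (x y : aff) : aff.
Proof.
exists ((val x).1 * (val y).1, (val x).1 * (val y).2 + (val x).2).
by rewrite /= mulf_neq0 //; [case: x | case: y].
Defined.

Definition ainv (x : aff) : aff.
Proof.
exists ((val x).1^-1, - ((val x).1^-1 * (val x).2)).
by rewrite /= invr_eq0; case: x.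
Defined.

Definition aone : aff := exist _ (1, 0) (oner_neq0 F).

Lemma amulA (x y z : aff) : amul x (amul y z) = amul (amul x y) z.
Proof. by apply: val_inj => /=; congr pair; ring. Qed.

Lemma amul1 (x : aff) : amul aone x = x.
Proof. by apply: val_inj; case: x => [[p q] h] /=; congr pair; ring. Qed.

Lemma amulV (x : aff) : amul (ainv x) x = aone.
Proof.
apply: val_inj; case: x => [[p q] h] /=.
by congr pair; [rewrite mulVf | rewrite addrN].
Qed.

Definition affine_grp : grp := Grp amulA amul1 amulV.

Definition atrans (t : F) : affine_grp := exist _ (1, t) (oner_neq0 F).

Definition adilate (s : F) : aff := insubd aone (s, 0).

Lemma val_adilate (s : F) : s != 0 -> val (adilate s) = (s, 0).
Proof. by move=> s_neq0; rewrite /adilate insubdK. Qed.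

Lemma val_gexpn_atrans (t : F) (n : nat) : val (gexpn (atrans t) n) = (1, t *+ n).
Proof.
elim: n => [//|n IHn] /=.
move: IHn; case: (gexpn (atrans t) n) => [[p q] h] /= [-> ->].
by rewrite !mul1r mulrS addrC.
Qed.

Lemma val_gexpz_atrans (t : F) (z : int) : val (gexpz (atrans t) z) = (1, t *~ z).
Proof.
case: z => n; first exact: val_gexpn_atrans.
rewrite -[gexpz _ _]/(ginv (gexpn (atrans t) n.+1)).
have := val_gexpn_atrans t n.+1.
case: (gexpn (atrans t) n.+1) => [[p q] h] /= [-> ->].
by rewrite NegzE mulrNz invr1 mul1r.
Qed.

End AffineGroup.

Lemma eval_word_cat (V E : Type) (H : grp) (f : V -> H) (g : E -> H)
    (w1 w2 : list (letter V E)) :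
  eval_word f g (w1 ++ w2) = gmul (eval_word f g w1) (eval_word f g w2).
Proof.
elim: w1 => [|[v z|e] w IHw] /=; first by rewrite gmul1.
  by rewrite IHw gmulA.
by rewrite IHw gmulA.
Qed.

Lemma fact_wordS (V E : Type) (n : nat) (a : nat -> V) (y : nat -> E)
    (k : nat -> int) :
  fact_word n.+1 a y k = fact_word n a y k ++ [:: LE V (y n.+1); LV E (a n.+1) (k n.+1)].
Proof.
have iotaS : seq.iota 1 n.+1 = seq.iota 1 n ++ [:: n.+1].
  by rewrite -[n.+1]addn1 iotaD addnC.
by rewrite /fact_word iotaS map_cat flatten_cat.
Qed.

Section AffineModel.

Variables (V E : finType) (iota tau : E -> V) (bar : E -> E) (alpha beta : E -> int).
Hypothesis alpha_beta_neq0 : forall e, alpha e <> 0 /\ beta e <> 0.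
Hypothesis alpha_beta_bar : forall e, alpha e = beta (bar e).
Hypothesis barK : forall e, bar (bar e) = e.

Definition edge_ratio (e : E) : rat := (alpha e)%:~R / (beta e)%:~R.

Lemma alpha_neq0 (e : E) : (alpha e)%:~R != 0 :> rat.
Proof. by rewrite intr_eq0; apply/eqP; case: (alpha_beta_neq0 e). Qed.

Lemma beta_neq0 (e : E) : (beta e)%:~R != 0 :> rat.
Proof. by rewrite intr_eq0; apply/eqP; case: (alpha_beta_neq0 e). Qed.

Lemma edge_ratio_neq0 (e : E) : edge_ratio e != 0.
Proof. by rewrite mulf_neq0 ?invr_eq0 ?alpha_neq0 ?beta_neq0. Qed.

Lemma edge_ratio_barK (e : E) : edge_ratio (bar e) * edge_ratio e = 1.
Proof.
have alpha_bar : alpha (bar e) = beta e by rewrite alpha_beta_bar barK.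
rewrite /edge_ratio alpha_bar -alpha_beta_bar.
by field; rewrite alpha_neq0 beta_neq0.
Qed.

Lemma edge_ratio_beta (e : E) : edge_ratio e * (beta e)%:~R = (alpha e)%:~R.
Proof. by rewrite /edge_ratio; field; rewrite beta_neq0. Qed.

Definition vertex_image (_ : V) : affine_grp rat := atrans 1.

Definition edge_image (e : E) : affine_grp rat := adilate (edge_ratio e).

Lemma affine_F_model : F_model iota tau bar alpha beta vertex_image edge_image.
Proof.
split=> e; apply: val_inj => /=; rewrite !val_adilate ?edge_ratio_neq0 //=.
  by rewrite edge_ratio_barK mulr0 addr0.
rewrite !val_gexpz_atrans /= !mulr1 mulr0 add0r addr0.
by rewrite mulrC edge_ratio_barK edge_ratio_beta.
Qed.

Lemma val_eval_fact_word (n : nat) (a : nat -> V) (y : nat -> E) (k : nat -> int) :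
  val (eval_word vertex_image edge_image (fact_word n a y k)) =
  (\prod_(1 <= mu < n.+1) edge_ratio (y mu),
   \sum_(0 <= nu < n.+1) (k nu)%:~R * \prod_(1 <= mu < nu.+1) edge_ratio (y mu)).
Proof.
elim: n => [|n IHn].
  rewrite /= val_gexpz_atrans /= big_nat1 big_geq //.
  by rewrite !mul1r add0r mulr1.
rewrite fact_wordS eval_word_cat; move: IHn.
case: (eval_word _ _ (fact_word n a y k)) => [[p q] h] /= [-> ->].
rewrite val_adilate ?edge_ratio_neq0 //= val_gexpz_atrans /=.
rewrite [\sum_(0 <= nu < n.+2) _]big_nat_recr //= [\prod_(1 <= mu < n.+2) _]big_nat_recr //=.
rewrite !mul1r add0r addr0 mulr1; congr pair.
by rewrite addrC mulrA mulrC.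
Qed.

Lemma val_eval_vertex_power (v : V) (m : int) :
  val (eval_word vertex_image edge_image [:: LV E v m]) = (1, m%:~R).
Proof. by rewrite /= val_gexpz_atrans /= mulr1 mul1r add0r. Qed.

End AffineModel.

Theorem lemma3p1 (V E : finType) (iota tau : E -> V) (bar : E -> E)
  (alpha beta : E -> int)
  (HG : is_GBS iota tau bar alpha beta)
  (n : nat) (a : nat -> V) (y : nat -> E) (k : nat -> int)
  (Hfac : is_G_factorization iota tau n a y)
  (Hsub : exists m : int,
     F_eq iota tau bar alpha beta (fact_word n a y k) [:: @LV V E (a 0%N) m]) :
  exists K : int,
    (K%:~R : rat) = \sum_(0 <= nu < n.+1)
        (k nu)%:~R * \prod_(1 <= mu < nu.+1)
          ((alpha (y mu))%:~R / (beta (y mu))%:~R)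
    /\ F_eq iota tau bar alpha beta (fact_word n a y k) [:: @LV V E (a 0%N) K].
Proof.
case: Hsub => m w_eq_am; exists m; split => //.
case: HG => _ [barK [_ [_ [alpha_beta_neq0 alpha_beta_bar]]]].
have model := affine_F_model iota tau alpha_beta_neq0 alpha_beta_bar barK.
have := congr1 val (w_eq_am _ _ _ model).
by rewrite (val_eval_fact_word alpha_beta_neq0) val_eval_vertex_power => -[_ ->].
Qed.
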